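(* For every $\epsilon$ with $0<\epsilon<1$ and every $F\in\mathbb{N}^d$, $$N(F)\le\sqrt{3}^{\,(1-2\epsilon^d)\|F\|}+\epsilon^d\|F\|\,\phi^{\|F\|}\left(\frac{\phi}{\sqrt[4]{5}}\right)^{(1-(1-\epsilon)^d)\|F\|},$$ where $\phi=\frac{1+\sqrt5}{2}$.
   Context: $\mathbb{N}=\{0,1,2,\dots\}$. A GNS is a submonoid $S\subseteq\mathbb{N}^d$ with finite complement $\mathcal{H}(S)=\mathbb{N}^d\setminus S$. A Frobenius GNS with Frobenius gap $F$ is a GNS such that $F$ is the unique maximal element of $\mathcal{H}(S)$ for the natural partial order. $N(F)$ is the number of Frobenius GNS $S\subseteq\mathbb{N}^d$ with Frobenius gap $F$. $\|F\|=\prod_{i=1}^d(F^{(i)}+1)$. *)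

From mathcomp Require Import all_boot.
From Stdlib Require Import Reals ClassicalEpsilon.
Set Implicit Arguments. Unset Strict Implicit. Unset Printing Implicit Defensive.

Definition pt (d : nat) := 'I_d -> nat.

Definition pt0 (d : nat) : pt d := fun _ => 0%N.
Definition ptadd (d : nat) (x y : pt d) : pt d := fun i => (x i + y i)%N.
Definition ptle (d : nat) (x y : pt d) : Prop := forall i, (x i <= y i)%N.
Definition ptlt (d : nat) (x y : pt d) : Prop := ptle x y /\ x <> y.

Definition is_GNS (d : nat) (S : pt d -> Prop) : Prop :=
  S (@pt0 d) /\
  (forall x y, S x -> S y -> S (ptadd x y)) /\
  (exists l : list (pt d), forall x, ~ S x -> List.In x l).

Definition is_Frobenius_GNS (d : nat) (S : pt d -> Prop) (F : pt d) : Prop :=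
  is_GNS S /\
  ~ S F /\
  (forall h, ~ S h -> ~ ptlt F h) /\
  (forall h, ~ S h -> (forall h', ~ S h' -> ~ ptlt h h') -> h = F).

(* Finite encoding used to count: every hole of a Frobenius GNS with gap F
   lies in the box [0, F], hence in the cube {0..m}^d with m = max_i F i.
   A GNS is determined by its (finite) hole set, so Frobenius GNS with gap F
   correspond bijectively to hole sets H : {set cube} with the property below. *)
Definition maxF (d : nat) (F : pt d) : nat := \max_(i < d) F i.
Definition cube (d : nat) (F : pt d) := {ffun 'I_d -> 'I_(maxF F).+1}.
Definition cube_pt (d : nat) (F : pt d) (c : cube F) : pt d :=
  fun i => nat_of_ord (c i).
Definition S_of (d : nat) (F : pt d) (H : {set cube F}) : pt d -> Prop :=
  fun x => ~ (exists c, c \in H /\ cube_pt c = x).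

Definition asbool (P : Prop) : bool :=
  if excluded_middle_informative P then true else false.

Definition NF (d : nat) (F : pt d) : nat :=
  #|[set H : {set cube F} | asbool (is_Frobenius_GNS (S_of H) F) ]|.

Definition normF (d : nat) (F : pt d) : nat := \prod_(i < d) (F i).+1.

Definition golden : R := ((1 + sqrt 5) / 2)%R.

(* The hole set H of a Frobenius GNS with Frobenius gap F lies in the box
   [0, F], contains F but not 0, and no two non-holes sum to a hole; in
   particular H contains c or F - c for every c in the box.  Fix a set L of
   about eps^d ||F|| points near 0, with coordinates below eps (F_i + 1).
   If F - l is a hole for no nonzero l in L, then H is forced on L and F - L,
   and on the rest of the box the non-holes are independent in the graph
   c -- F - c, whose components are edges and loops: at most sqrt 3 choices
   per point, i.e. sqrt 3 ^ (||F|| - 2 |L|) in all.  If F - l is a hole, the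
   non-holes are independent in the graph c -- c' for c + c' in {F, F - l},
   whose components are paths.  A path on k vertices has at most
   fib (k + 2) <= phi^k (phi / 5^(1/4))^2 independent sets, and both its ends
   are points c with c + l outside the box, of which there are at most
   (1 - (1 - eps)^d) ||F||; a path that folds back onto itself carries a loop
   and has at most fib (k + 1) <= phi^k independent sets.  Multiplying over
   components and summing over l gives the bound.  When eps^d ||F|| exceeds
   ||F|| - 1, the bound N(F) <= sqrt 3 ^ (||F|| - 2) suffices instead. *)

From mathcomp Require Import all_boot zify.
From Stdlib Require Import Reals Lra Psatz Classical ClassicalEpsilon FunctionalExtensionality.
Set Implicit Arguments. Unset Strict Implicit. Unset Printing Implicit Defensive.

Lemma mkseq_sorted (T : Type) (e : rel T) (f : nat -> T) n :
  (forall a, a.+1 < n -> e (f a) (f a.+1)) -> sorted e (mkseq f n).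
Proof.
case: n => // n h; apply/(sortedP (f 0)) => a; rewrite size_mkseq => an.
by rewrite !nth_mkseq ?h // ltnW.
Qed.

Lemma mem_mkseq (T : eqType) (f : nat -> T) n y :
  (y \in mkseq f n) = [exists a : 'I_n, f a == y].
Proof.
apply/mapP/existsP => [[a] | [a /eqP <-]]; last by exists (val a); rewrite // mem_iota /=.
by rewrite mem_iota => /andP[_ an] ->; exists (Ordinal an).
Qed.

Lemma bigmax_ord_spec n (P : pred nat) : P 0 -> (forall j, P j -> j < n) ->
  P (\max_(j < n | P j) j) /\ (forall j, P j -> j <= \max_(j < n | P j) j).
Proof.
move=> P0 Pn; split => [|j Pj].
  have A0 : 0 < #|[pred k : 'I_n | P k]| by apply/card_gt0P; exists (Ordinal (Pn 0 P0)).
  by have [i Pi ->] := eq_bigmax_cond val A0.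
exact: (@leq_bigmax_cond _ (fun k : 'I_n => P k) val (Ordinal (Pn j Pj))).
Qed.

Lemma nat_parity a : (exists j, a = j.*2) \/ (exists j, a = j.*2.+1).
Proof. by rewrite -[a]odd_double_half; case: (odd a); [right | left]; exists a./2. Qed.

Lemma card_ffun_lt d N (bnd : 'I_d -> nat) : (forall i, bnd i <= N) ->
  #|[set c : {ffun 'I_d -> 'I_N} | [forall i, c i < bnd i]]| = \prod_(i < d) bnd i.
Proof.
move=> bndN.
have card_lt i : #|[pred j : 'I_N | j < bnd i]| = bnd i.
  have widen_inj : injective (widen_ord (bndN i)).
    by move=> j k e; apply/val_inj/(congr1 val e).
  rewrite -[RHS](card_ord (bnd i)) -(card_imset _ widen_inj).
  apply: eq_card => j; rewrite inE /=; apply/idP/imsetP => [jb | [k _ ->]].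
    by exists (Ordinal jb) => //; apply/val_inj.
  exact: (ltn_ord k).
rewrite (eq_bigr _ (fun i _ => esym (card_lt i))).
have := card_family (fun i : 'I_d => [pred j : 'I_N | j < bnd i]).
rewrite foldrE big_map big_enum /= => <-; rewrite cardsE.
by apply: eq_card => c; rewrite inE; apply/forallP/familyP => h i; have := h i; rewrite inE.
Qed.

Lemma card_bigcup_leq (I T : finType) (P : pred I) (A : I -> {set T}) :
  #|\bigcup_(i | P i) A i| <= \sum_(i | P i) #|A i|.
Proof.
elim/big_rec2: _ => [|i B s _ IH]; first by rewrite cards0.
exact: leq_trans (leq_card_setU _ _) (leq_add (leqnn _) IH).
Qed.

Lemma exists_subset_card (T : finType) (A : {set T}) x k : x \in A -> 0 < k <= #|A| ->
  exists L : {set T}, [/\ L \subset A, x \in L & #|L| = k].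
Proof.
move=> xA; elim: k => [// | k IH] /andP[_ kA].
have [-> | k0] := posnP k; first by exists [set x]; rewrite sub1set xA set11 cards1.
have /IH[L [LA xL cL]] : 0 < k <= #|A| by rewrite k0 ltnW.
have /card_gt0P[y] : 0 < #|A :\: L| by rewrite cardsDS // cL subn_gt0.
rewrite inE => /andP[yL yA]; exists (y |: L).
by rewrite subUset sub1set yA LA !inE xL orbT cardsU1 yL cL.
Qed.

Fixpoint fib n := if n is (m.+1 as k).+1 then fib k + fib m else n.

Section IndependentSets.
Variables (T : finType) (adj : rel T).

Definition indep (I : {set T}) := [forall x in I, forall y in I, ~~ adj x y].
Definition n_indep (V : {set T}) := #|[set I : {set T} | (I \subset V) && indep I]|.
Definition sadj : rel T := fun x y => adj x y || adj y x.
Definition component x : {set T} := [set y | connect sadj x y].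

Lemma sadj_sym : symmetric sadj.
Proof. by move=> x y; rewrite /sadj orbC. Qed.

Let sadj_csym := sym_connect_sym sadj_sym.

Lemma indepP (I : {set T}) :
  reflect (forall x y, x \in I -> y \in I -> ~~ adj x y) (indep I).
Proof.
apply: (iffP forallP) => [H x y xI yI | H x].
  by move: (H x); rewrite xI => /forallP /(_ y); rewrite yI.
by apply/implyP => xI; apply/forallP => y; apply/implyP; apply: H.
Qed.

Lemma indepS (I J : {set T}) : I \subset J -> indep J -> indep I.
Proof. by move=> /subsetP IJ /indepP iJ; apply/indepP => x y /IJ xJ /IJ; apply: iJ. Qed.

Lemma n_indepS (V W : {set T}) : V \subset W -> n_indep V <= n_indep W.
Proof.
move=> VW; apply/subset_leq_card/subsetP => I; rewrite !inE => /andP[IV ->].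
by rewrite (subset_trans IV VW).
Qed.

Lemma n_indep0 : n_indep set0 = 1.
Proof.
rewrite /n_indep -(cards1 (set0 : {set T})); apply: eq_card => I; rewrite !inE subset0.
by case: eqP => // ->; apply/indepP => x y; rewrite inE.
Qed.

Lemma n_indepU (V W : {set T}) : n_indep (V :|: W) <= n_indep V * n_indep W.
Proof.
rewrite /n_indep -cardsX.
pose split I : {set T} * {set T} := (I :&: V, I :&: W).
have split_inj : {in [set I : {set T} | (I \subset V :|: W) && indep I] &, injective split}.
  move=> I J; rewrite !inE => /andP[IVW _] /andP[JVW _] [eV eW].
  by rewrite -(setIidPl IVW) -(setIidPl JVW) !setIUr eV eW.
rewrite -(card_in_imset split_inj); apply/subset_leq_card/subsetP => p /imsetP[I].
rewrite !inE => /andP[_ iI] ->; rewrite !subsetIr /=.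
by rewrite !(indepS (subsetIl _ _) iI).
Qed.

Lemma n_indep_loop (V : {set T}) v : adj v v -> n_indep V <= n_indep (V :\ v).
Proof.
move=> vv; apply/subset_leq_card/subsetP => I; rewrite !inE => /andP[IV iI].
rewrite iI andbT; apply/subsetP => x xI; rewrite !inE (subsetP IV x xI) andbT.
apply: contraTneq xI => ->; apply/negP => vI.
by move/indepP: iI => /(_ v v vI vI); rewrite vv.
Qed.

Lemma n_indep_vertex (V : {set T}) v :
  n_indep V <= n_indep (V :\ v) + n_indep (V :\ v :\: [set u | sadj v u]).
Proof.
set A := [set I : {set T} | (I \subset V) && indep I].
rewrite /n_indep -/A -(cardsID [set I : {set T} | v \in I] A) addnC; apply: leq_add.
  apply/subset_leq_card/subsetP => I; rewrite !inE => /andP[vI /andP[IV ->]].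
  rewrite andbT; apply/subsetP => x xI; rewrite !inE (subsetP IV x xI) andbT.
  by apply: contraNneq vI => <-.
have del_inj : {in A :&: [set I : {set T} | v \in I] &, injective (fun I => I :\ v)}.
  move=> I J; rewrite !inE => /andP[_ vI] /andP[_ vJ] e.
  by rewrite -(setD1K vI) -(setD1K vJ) e.
rewrite -(card_in_imset del_inj); apply/subset_leq_card/subsetP => p /imsetP[I].
rewrite !inE => /andP[/andP[IV iI] vI] ->; rewrite (indepS (subsetDl _ _) iI) andbT.
apply/subsetP => x; rewrite !inE => /andP[xv xI]; rewrite xv (subsetP IV x xI) andbT.
by move/indepP: iI => iI; rewrite negb_or (iI _ _ vI xI) (iI _ _ xI vI).
Qed.

Lemma n_indep_walk q : sorted sadj q -> n_indep [set x in q] <= fib (size q).+2.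
Proof.
have [n] := ubnP (size q); elim: n q => // n IH [|v [|u r]] /= szq.
- by move=> _; rewrite (_ : [set x in [::]] = set0) ?n_indep0 //; apply/setP => x; rewrite !inE.
- move=> _; apply: leq_trans (n_indep_vertex _ v) _.
  rewrite (_ : [set x in [:: v]] :\ v = set0) ?set0D ?n_indep0 //.
  by apply/setP => x; rewrite !inE andNb.
move=> /andP[vu ur]; apply: leq_trans (n_indep_vertex _ v) _; apply: leq_add.
  apply: leq_trans (IH (u :: r) _ ur) => //; apply: n_indepS.
  by apply/subsetP => x; rewrite !inE => /andP[/negbTE->].
apply: leq_trans (IH r _ (path_sorted ur)); first apply: n_indepS; last by rewrite -ltnS ltnW.
apply/subsetP => x; rewrite !inE => /andP[vx /andP[/negbTE->]] /=.
by case: eqP vx => // ->; rewrite vu.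
Qed.

Lemma n_indep_walk_loop p v : sorted sadj (rcons p v) -> adj v v ->
  n_indep [set x in rcons p v] <= fib (size p).+2.
Proof.
move=> pv vv; apply: leq_trans (n_indep_loop _ vv) _.
rewrite -cats1 in pv; apply: leq_trans (n_indep_walk (cat_sorted2 pv).1); apply: n_indepS.
by apply/subsetP => x; rewrite !inE mem_rcons inE => /andP[/negbTE->].
Qed.

Lemma component_walk q x : sorted sadj q -> closed sadj [set y in q] -> x \in q ->
  component x = [set y in q].
Proof.
move=> qs qc xq; apply/setP => y; rewrite !inE; apply/idP/idP => [xy | yq].
  by have := closed_connect qc xy; rewrite !inE xq.
case: q qs {qc} xq yq => // v r /path_connect vr xq yq.
by apply: connect_trans (vr y yq); rewrite sadj_csym; apply: vr.
Qed.

Section Weight.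
Variables (a b : R) (S : {set T}).

Definition weight (X : {set T}) : R := a ^ #|X| * b ^ #|X :&: S|.

Lemma weightID (X P : {set T}) : weight X = (weight (X :&: P) * weight (X :\: P))%R.
Proof.
rewrite /weight -{1}(cardsID P X) -{1}(cardsID P (X :&: S)) !pow_add.
by rewrite setIAC -setIDAC; ring.
Qed.

Lemma weight_ge (X : {set T}) p q : (1 <= a)%R -> (1 <= b)%R ->
  p <= #|X| -> q <= #|X :&: S| -> (a ^ p * b ^ q <= weight X)%R.
Proof.
move=> a1 b1 pX qX; apply: Rmult_le_compat; try (apply: pow_le; lra).
  by apply: Rle_pow => //; apply/leP.
by apply: Rle_pow => //; apply/leP.
Qed.

Lemma n_indep_le_weight (U : {set T}) : (0 <= a)%R -> (0 <= b)%R ->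
  (forall x, x \in U -> (INR (n_indep (component x)) <= weight (component x))%R) ->
  forall V : {set T}, closed sadj V -> V \subset U -> (INR (n_indep V) <= weight V)%R.
Proof.
move=> a0 b0 comp_le V; have [n] := ubnP #|V|; elim: n V => // n IH V szV cV VU.
have [->|[x xV]] := set_0Vmem V; first by rewrite n_indep0 /weight set0I !cards0 /=; lra.
set P := component x; have xP : x \in P by rewrite inE connect0.
have PV : P \subset V.
  by apply/subsetP => y; rewrite inE => /(closed_connect cV); rewrite xV => <-.
have cVP : closed sadj (V :\: P).
  by move=> y z yz; rewrite !inE (cV _ _ yz) (same_connect_r sadj_csym (connect1 yz)).
have szVP : #|V :\: P| < n.
  rewrite -ltnS; apply: leq_trans szV; rewrite ltnS; apply: proper_card; apply/properP.
  by split; [apply: subsetDl | exists x => //; rewrite inE xP].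
rewrite (weightID V P) (setIidPr PV) -{1}(setID V P) (setIidPr PV).
apply: Rle_trans (le_INR _ _ (leP (n_indepU _ _))) _; rewrite mult_INR.
apply: Rmult_le_compat; try exact: pos_INR; first exact: comp_le (subsetP VU x xV).
by apply: IH cVP (subset_trans (subsetDl _ _) VU).
Qed.

End Weight.

End IndependentSets.

Section RealFacts.
Local Open Scope R_scope.

Lemma nat_ceil_ex (a : R) : 0 <= a -> exists k : nat, a <= INR k < a + 1.
Proof.
move=> a0; have [up_gt up_le] := archimed a.
have up0 : (0 <= up a)%Z by apply: le_IZR; lra.
have upE : INR (Z.to_nat (up a)) = IZR (up a) by rewrite INR_IZR_INZ Znat.Z2Nat.id.
have [up_lt | up_eq] := Rlt_le_dec (IZR (up a)) (a + 1).
  by exists (Z.to_nat (up a)); rewrite upE; lra.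
have up_pos : (0 < Z.to_nat (up a))%nat by apply/ltP/INR_lt; rewrite upE /=; lra.
by rewrite -(prednK up_pos) S_INR in upE; exists (Z.to_nat (up a)).-1; lra.
Qed.

Lemma INR_lt_succ (k m : nat) : INR k < INR m + 1 -> (k <= m)%nat.
Proof. by rewrite -S_INR => /INR_lt /ltP. Qed.

Lemma INR_sum_le (T : finType) (A : {pred T}) (f : T -> nat) (X : R) :
  (forall t, t \in A -> INR (f t) <= X) -> INR (\sum_(t in A) f t) <= INR #|A| * X.
Proof.
move=> fX; rewrite -sum1_card.
elim/big_rec2: _ => [|t s u tA IH]; first by rewrite /=; lra.
by rewrite !plus_INR /=; have := fX t tA; lra.
Qed.

Lemma prod_INR_scale_le (c : R) d (u v : 'I_d -> nat) : 0 <= c ->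
  (forall i, c * INR (u i) <= INR (v i)) ->
  c ^ d * INR (\prod_(i < d) u i) <= INR (\prod_(i < d) v i).
Proof.
move=> c0; elim: d u v => [|d IH] u v uv; first by rewrite !big_ord0 /=; lra.
rewrite !big_ord_recr /= !mult_INR.
set U := INR (\prod_(i < d) _); set V := INR (\prod_(i < d) _).
have UV : c ^ d * U <= V by apply: IH => i; apply: uv.
rewrite (_ : c * c ^ d * (U * INR (u ord_max)) = (c ^ d * U) * (c * INR (u ord_max))).
  apply: Rmult_le_compat => //; apply: Rmult_le_pos => //;
    [exact: pow_le | exact: pos_INR | exact: pos_INR].
by ring.
Qed.

Lemma pow_le_1_sub (eps : R) d : 0 < eps < 1 -> (0 < d)%nat -> eps ^ d <= 1 - (1 - eps) ^ d.
Proof.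
case: d => // d [e0 e1] _; rewrite /=.
have pow_le1 y : 0 <= y <= 1 -> 0 <= y ^ d <= 1.
  by move=> y01; split; [apply: pow_le | rewrite -(pow1 d); apply: pow_incr]; lra.
by have := pow_le1 eps ltac:(lra); have := pow_le1 (1 - eps) ltac:(lra); nra.
Qed.

End RealFacts.

Section Golden.
Local Open Scope R_scope.

Definition golden_conj : R := (1 - sqrt 5) / 2.
Definition kappa : R := golden / Rpower 5 (1 / 4).

Lemma sqrt5_sq : sqrt 5 * sqrt 5 = 5.
Proof. by apply: sqrt_sqrt; lra. Qed.

Lemma sqrt5_bounds : 2 < sqrt 5 < 3.
Proof. by have := sqrt5_sq; have := sqrt_pos 5; split; nra. Qed.

Lemma golden_sq : golden ^ 2 = golden + 1.
Proof. by rewrite /golden; have h := sqrt5_sq; field_simplify; nra. Qed.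

Lemma golden_conj_sq : golden_conj ^ 2 = golden_conj + 1.
Proof. by rewrite /golden_conj; have h := sqrt5_sq; field_simplify; nra. Qed.

Lemma golden_gt1 : 1 < golden.
Proof. by rewrite /golden; have := sqrt5_bounds; lra. Qed.

Lemma pow_fib_step x k : x ^ 2 = x + 1 -> x ^ k.+2 = x ^ k.+1 + x ^ k.
Proof. by move=> x2; rewrite -(addn2 k) pow_add x2 /=; ring. Qed.

Lemma fib_binet n : INR (fib n) = (golden ^ n - golden_conj ^ n) / sqrt 5.
Proof.
have s5 := sqrt5_bounds.
elim/ltn_ind: n => -[|[|k]] IH; try by rewrite /= /golden /golden_conj; field; lra.
rewrite (_ : fib k.+2 = (fib k.+1 + fib k)%nat) // plus_INR !IH //.
by rewrite (pow_fib_step _ golden_sq) (pow_fib_step _ golden_conj_sq); field; lra.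
Qed.

Lemma fib_even_le j : INR (fib (2 * j)) <= golden ^ (2 * j) / sqrt 5.
Proof.
rewrite fib_binet pow_mult (pow_mult golden_conj) golden_conj_sq.
have := sqrt5_bounds => s5.
have : 0 <= (golden_conj + 1) ^ j by apply: pow_le; rewrite /golden_conj; lra.
by move=> h; apply: Rmult_le_compat_r; [apply/Rlt_le/Rinv_0_lt_compat | ]; lra.
Qed.

Lemma fib_le_golden j : INR (fib j.+1) <= golden ^ j.
Proof.
have g1 := golden_gt1.
elim/ltn_ind: j => -[|[|k]] IH; try by rewrite /=; lra.
rewrite (_ : fib k.+3 = (fib k.+2 + fib k.+1)%nat) // plus_INR (pow_fib_step _ golden_sq).
by have := IH k.+1 (ltnSn _); have := IH k (ltnW (ltnSn _)); lra.
Qed.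

Lemma root4_5_sq : Rpower 5 (1 / 4) ^ 2 = sqrt 5.
Proof.
rewrite -Rpower_pow; last exact: exp_pos.
rewrite Rpower_mult -Rpower_sqrt; last lra.
by congr Rpower; rewrite /=; field.
Qed.

Lemma kappa_sq : kappa ^ 2 = golden ^ 2 / sqrt 5.
Proof. by rewrite /kappa /Rdiv Rpow_mult_distr pow_inv root4_5_sq. Qed.

Lemma kappa_pos : 0 < kappa.
Proof. by apply: Rdiv_lt_0_compat; [have := golden_gt1; lra | apply: exp_pos]. Qed.

Lemma kappa_ge1 : 1 <= kappa.
Proof.
have k0 := kappa_pos; have [s2 s3] := sqrt5_bounds.
have k2 : 1 <= kappa ^ 2.
  rewrite kappa_sq golden_sq; apply/(Rmult_le_reg_r (sqrt 5)); first lra.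
  by rewrite /Rdiv Rmult_assoc Rinv_l /golden; lra.
by move: k2; rewrite /= Rmult_1_r => k2; apply: Rnot_lt_le => k1; nra.
Qed.

Lemma sqrt3_le_golden_kappa : sqrt 3 <= golden * kappa.
Proof.
have g1 := golden_gt1; have k1 := kappa_ge1.
have [s2 s3] := sqrt5_bounds; have s55 := sqrt5_sq.
rewrite -(sqrt_pow2 (golden * kappa)); last by apply: Rmult_le_pos; lra.
apply: sqrt_le_1_alt; rewrite Rpow_mult_distr kappa_sq golden_sq.
rewrite /Rdiv -Rmult_assoc (_ : (golden + 1) * (golden + 1) = 3 * golden + 2); last first.
  by have h := golden_sq; rewrite /= Rmult_1_r in h; nra.
apply/(Rmult_le_reg_r (sqrt 5)); first lra.
by rewrite Rmult_assoc Rinv_l /golden; [nra | lra].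
Qed.

Definition NF_bound (n : nat) (e r : R) :=
  Rpower (sqrt 3) ((1 - 2 * e) * INR n) +
  e * INR n * Rpower golden (INR n) * Rpower kappa (r * INR n).

Lemma NF_bound_ge0 (n : nat) (e r : R) : 0 <= e -> 0 <= NF_bound n e r.
Proof.
move=> e0; rewrite /NF_bound; have := exp_pos ((1 - 2 * e) * INR n * ln (sqrt 3)).
have := pos_INR n; have := exp_pos (INR n * ln golden); have := exp_pos (r * INR n * ln kappa).
rewrite /Rpower => *; apply: Rplus_le_le_0_compat; first lra.
by repeat apply: Rmult_le_pos; lra.
Qed.

Lemma split_le_NF_bound (n k : nat) (e r : R) :
  e * INR n <= INR k -> INR k < e * INR n + 1 ->
  Rpower (sqrt 3) (INR n - 2 * INR k) + (INR k - 1) * (golden ^ n * Rpower kappa (r * INR n))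
  <= NF_bound n e r.
Proof.
move=> ek ke; apply: Rplus_le_compat.
  by apply: Rle_Rpower; [rewrite -sqrt_1; apply: sqrt_le_1_alt | ]; lra.
rewrite -Rpower_pow; last by have := golden_gt1; lra.
set A := Rpower golden _; set B := Rpower kappa _.
have AB0 : 0 <= A * B by apply: Rmult_le_pos; apply/Rlt_le/exp_pos.
by rewrite (Rmult_assoc (e * INR n)); apply: Rmult_le_compat_r => //; lra.
Qed.

Lemma sqrt3_le_NF_bound (n : nat) (e r : R) :
  (2 <= n)%nat -> INR n - 1 < e * INR n -> e <= r ->
  Rpower (sqrt 3) (INR n - 2) <= NF_bound n e r.
Proof.
move=> n2 en er; have n2' : 2 <= INR n by apply: (le_INR 2); apply/leP.
have [g1 k1] := (golden_gt1, kappa_ge1); have s3 := sqrt3_le_golden_kappa.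
have sqrt3_1 : 1 <= sqrt 3 by rewrite -sqrt_1; apply: sqrt_le_1_alt; lra.
rewrite /NF_bound.
suff h : Rpower (sqrt 3) (INR n - 2) <=
         e * INR n * Rpower golden (INR n) * Rpower kappa (r * INR n).
  by have := exp_pos ((1 - 2 * e) * INR n * ln (sqrt 3)); rewrite /Rpower in h *; lra.
apply: Rle_trans (_ : Rpower (golden * kappa) (INR n - 1) <= _).
  apply: Rle_trans (_ : Rpower (sqrt 3) (INR n - 1) <= _); first by apply: Rle_Rpower; lra.
  by apply: Rle_Rpower_l; [lra | split; [lra | exact: s3]].
rewrite -Rpower_mult_distr; try lra.
have n1 : r * INR n >= INR n - 1 by nra.
apply: Rle_trans (_ : 1 * Rpower golden (INR n) * Rpower kappa (r * INR n) <= _); last first.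
  apply: Rmult_le_compat_r; first exact/Rlt_le/exp_pos.
  by apply: Rmult_le_compat_r; [apply/Rlt_le/exp_pos | lra].
rewrite Rmult_1_l; apply: Rmult_le_compat; try exact/Rlt_le/exp_pos.
  by apply: Rle_Rpower; lra.
by apply: Rle_Rpower; lra.
Qed.

End Golden.

Lemma asboolP (P : Prop) : reflect P (asbool P).
Proof. by rewrite /asbool; case: excluded_middle_informative => h; constructor. Qed.

Section Box.
Variables (d : nat) (F : pt d).

Lemma F_le_maxF i : F i <= maxF F.
Proof. exact: (@leq_bigmax _ F i). Qed.

Definition cube_of (p : pt d) : cube F := [ffun i => inord (p i)].

Lemma cube_ofE (p : pt d) i : p i <= F i -> cube_of p i = p i :> nat.
Proof. by move=> pF; rewrite ffunE inordK // ltnS (leq_trans pF (F_le_maxF i)). Qed.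

Lemma cube_ext (c c' : cube F) : (forall i, c i = c' i :> nat) -> c = c'.
Proof. by move=> cc'; apply/ffunP => i; apply/val_inj/cc'. Qed.

Lemma cube_pt_inj : injective (@cube_pt d F).
Proof. by move=> c c' e; apply: cube_ext => i; have := congr1 (fun f => f i) e. Qed.

Definition box : {set cube F} := [set c : cube F | [forall i, c i <= F i]].

Lemma in_boxP (c : cube F) : reflect (forall i, c i <= F i) (c \in box).
Proof. by rewrite inE; apply: forallP. Qed.

Lemma card_box : #|box| = normF F.
Proof.
rewrite /normF -(card_ffun_lt (N := (maxF F).+1)) => [|i]; last by rewrite ltnS F_le_maxF.
by apply: eq_card => c; rewrite !inE.
Qed.

Definition c0 := cube_of (@pt0 d).
Definition cF := cube_of F.

Lemma c0E i : c0 i = 0 :> nat.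
Proof. by rewrite cube_ofE. Qed.

Lemma cFE i : cF i = F i :> nat.
Proof. by rewrite cube_ofE. Qed.

Lemma c0_box : c0 \in box.
Proof. by apply/in_boxP => i; rewrite c0E. Qed.

Lemma cF_box : cF \in box.
Proof. by apply/in_boxP => i; rewrite cFE. Qed.

Lemma c0_neq_cF i : 0 < F i -> c0 != cF.
Proof.
move=> Fi; apply/eqP => /(congr1 (fun c : cube F => val (c i))) /=.
by rewrite c0E cFE => F0; rewrite -F0 in Fi.
Qed.

Lemma normF_ge2 i : 0 < F i -> 2 <= normF F.
Proof.
move/c0_neq_cF => ne; have := cards2 c0 cF; rewrite ne => <-.
by rewrite -card_box subset_leq_card // subUset !sub1set c0_box cF_box.
Qed.

Lemma cube_neq0 (l : cube F) : l != c0 -> exists i, 0 < l i.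
Proof.
move=> l0; apply: NNPP => no_pos; move/eqP: l0; apply; apply: cube_ext => i.
by rewrite c0E; apply/eqP; rewrite -leqn0 leqNgt; apply/negP => li; apply: no_pos; exists i.
Qed.

Definition antipode (c : cube F) := cube_of (fun i => F i - c i).

Lemma antipodeE (c : cube F) i : antipode c i = F i - c i :> nat.
Proof. by rewrite cube_ofE // leq_subr. Qed.

Lemma antipode_box (c : cube F) : antipode c \in box.
Proof. by apply/in_boxP => i; rewrite antipodeE leq_subr. Qed.

Lemma antipodeK : {in box, involutive antipode}.
Proof. by move=> c /in_boxP cB; apply: cube_ext => i; rewrite !antipodeE subKn. Qed.

Lemma antipode_inj : {in box &, injective antipode}.
Proof. by move=> c c' cB c'B e; rewrite -(antipodeK cB) -(antipodeK c'B) e. Qed.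

Lemma antipode_c0 : antipode c0 = cF.
Proof. by apply: cube_ext => i; rewrite antipodeE c0E cFE subn0. Qed.

Definition unshiftable (m : pt d) : {set cube F} :=
  [set c : cube F | ~~ [forall i, c i + m i <= F i]].

Definition adjF : rel (cube F) := fun c c' => [forall i, c i + c' i == F i].
Definition adj_shift (m : pt d) : rel (cube F) :=
  fun c c' => [forall i, c i + c' i + m i == F i].
Definition adjFm (m : pt d) : rel (cube F) := fun c c' => adjF c c' || adj_shift m c c'.

Lemma adjFP (c c' : cube F) : reflect (forall i, c i + c' i = F i :> nat) (adjF c c').
Proof. by apply: (iffP forallP) => h i; apply/eqP. Qed.

Lemma adj_shiftP m (c c' : cube F) :
  reflect (forall i, c i + c' i + m i = F i) (adj_shift m c c').
Proof. by apply: (iffP forallP) => h i; apply/eqP. Qed.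

Lemma adjF_sym (c c' : cube F) : adjF c c' = adjF c' c.
Proof. by apply/adjFP/adjFP => h i; rewrite addnC. Qed.

Lemma adjFm_sym m (c c' : cube F) : adjFm m c c' = adjFm m c' c.
Proof.
rewrite /adjFm adjF_sym; congr orb.
by apply/adj_shiftP/adj_shiftP => h i; rewrite -h [X in X + m i]addnC.
Qed.

Lemma adjF_antipode (c c' : cube F) : adjF c c' -> c' = antipode c.
Proof. by move/adjFP => h; apply: cube_ext => i; rewrite antipodeE -h addKn. Qed.

Lemma antipode_adjF (c : cube F) : c \in box -> adjF c (antipode c).
Proof. by move/in_boxP => cB; apply/adjFP => i; rewrite antipodeE subnKC. Qed.

Lemma adjFm_box m (c c' : cube F) : adjFm m c c' -> c' \in box.
Proof. by case/orP => [/adjFP | /adj_shiftP] h; apply/in_boxP => i; rewrite -(h i); lia. Qed.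

Lemma box_closed m : closed (sadj (adjFm m)) box.
Proof.
move=> c c'; rewrite /sadj adjFm_sym orbb => cc'.
by rewrite (adjFm_box cc'); move: cc'; rewrite adjFm_sym => /adjFm_box ->.
Qed.

End Box.

Arguments cube_of {d} F p.
Arguments box {d} F.
Arguments c0 {d} F.
Arguments cF {d} F.
Arguments antipode {d F}.
Arguments unshiftable {d} F m.
Arguments adjF {d} F.
Arguments adj_shift {d} F m.
Arguments adjFm {d} F m.

Section Antipodal.
Variables (d : nat) (F : pt d).
Implicit Types (x y : cube F) (A U V : {set cube F}).

Lemma antipode_eq x y : x \in box F -> y \in box F ->
  (antipode y == x) = (y == antipode x).
Proof. by move=> xB yB; apply/eqP/eqP => [<-|->]; rewrite antipodeK. Qed.

Lemma mem_antipode_imset A y : A \subset box F -> y \in box F ->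
  (y \in antipode @: A) = (antipode y \in A).
Proof.
move=> AB yB; apply/imsetP/idP => [[a aA ->] | yA]; first by rewrite antipodeK // (subsetP AB).
by exists (antipode y); rewrite ?antipodeK.
Qed.

Lemma sadj_adjF x y : sadj (adjF F) x y -> x \in box F /\ y = antipode x.
Proof.
move=> sxy; have xy : adjF F x y by case/orP: sxy; rewrite // adjF_sym.
split; last exact: adjF_antipode.
by move/adjFP: xy => h; apply/in_boxP => i; rewrite -(h i) leq_addr.
Qed.

Lemma closed_adjF V : (forall y, y \in box F -> (antipode y \in V) = (y \in V)) ->
  closed (sadj (adjF F)) V.
Proof. by move=> stV y z /sadj_adjF[yB ->]; rewrite stV. Qed.

Lemma component_adjF x : x \in box F ->
  component (adjF F) x = [set y in [:: x; antipode x]].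
Proof.
move=> xB; apply: component_walk; rewrite ?inE ?eqxx //=.
  by rewrite andbT /sadj antipode_adjF.
apply: closed_adjF => y yB; rewrite !inE antipode_eq ?antipode_box //.
by rewrite (inj_in_eq (@antipode_inj _ F)) ?antipode_box // orbC.
Qed.

Lemma n_indep_adjF U : closed (sadj (adjF F)) U -> U \subset box F ->
  (INR (n_indep (adjF F) U) <= sqrt 3 ^ #|U|)%R.
Proof.
have weightE (X : {set cube F}) : weight (sqrt 3) 1 set0 X = (sqrt 3 ^ #|X|)%R.
  by rewrite /weight pow1 Rmult_1_r.
move=> cU UB; rewrite -weightE.
apply: (n_indep_le_weight (sqrt_pos 3) Rle_0_1 _ cU UB) => x xB.
rewrite component_adjF // weightE.
have [xx | xnx] := eqVneq (antipode x) x.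
  have -> : [set y in [:: x; antipode x]] = [set x] by apply/setP => y; rewrite !inE xx orbb.
  have loop : adjF F x x by rewrite -{2}xx antipode_adjF.
  have := n_indep_loop [set x] loop; rewrite setDv n_indep0 cards1 /= Rmult_1_r.
  move/leP/le_INR => /= le1; apply: Rle_trans le1 _.
  by rewrite -sqrt_1; apply: sqrt_le_1_alt; lra.
have := @n_indep_walk _ (adjF F) [:: x; antipode x].
rewrite /= andbT /sadj antipode_adjF // => /(_ isT) /leP /le_INR.
have uq : uniq [:: x; antipode x] by rewrite /= inE eq_sym xnx.
rewrite cardsE (card_uniqP uq) /= Rmult_1_r sqrt_sqrt => [le3|]; last lra.
by apply: Rle_trans le3 _; lra.
Qed.

End Antipodal.

Section Frobenius.
Variables (d : nat) (F : pt d).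
Implicit Types (c : cube F) (H : {set cube F}).

Definition frob H := is_Frobenius_GNS (S_of H) F.

Lemma hole_of H p : ~ S_of H p -> exists2 c, c \in H & cube_pt c = p.
Proof. by move/NNPP => [c [cH <-]]; exists c. Qed.

Lemma S_of_notin H c : c \notin H -> S_of H (cube_pt c).
Proof. by move=> cH [c' [c'H /cube_pt_inj e]]; rewrite -e c'H in cH. Qed.

Lemma frob_cF H : frob H -> cF F \in H.
Proof.
move=> [_ [/hole_of[c cH cF'] _]]; suff <- : c = cF F by [].
by apply: cube_ext => i; rewrite cFE; exact: (congr1 (fun f => f i) cF').
Qed.

Lemma frob_c0 H : frob H -> c0 F \notin H.
Proof.
move=> [[S0 _] _]; apply/negP => c0H; apply: S0; exists (c0 F); split => //.
by apply: functional_extensionality => i; rewrite /cube_pt c0E.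
Qed.

Lemma frob_add H c1 c2 c : frob H -> c1 \notin H -> c2 \notin H ->
  (forall i, c1 i + c2 i = c i :> nat) -> c \notin H.
Proof.
move=> [[_ [S_add _]] _] /S_of_notin S1 /S_of_notin S2 e; apply/negP => cH.
apply: (S_add _ _ S1 S2); exists c; split => //.
by apply: functional_extensionality => i; rewrite /ptadd /cube_pt e.
Qed.

Definition csum c := \sum_i (c i : nat).

Lemma csum_lt c c' : (forall i, c i <= c' i) -> c != c' -> csum c < csum c'.
Proof.
move=> le_cc' ne_cc'; have [i lt_i] : exists i, c i < c' i.
  apply: NNPP => no_lt; move/eqP: ne_cc'; apply; apply: cube_ext => i.
  by apply/eqP; rewrite eqn_leq le_cc' leqNgt; apply/negP => lt_i; apply: no_lt; exists i.
rewrite /csum (bigD1 i) // [X in _ < X](bigD1 i) //= -addSn.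
by apply: leq_add => //; apply: leq_sum => j _.
Qed.

(* A hole above [c] maximising the coordinate sum is a maximal hole, hence [F]. *)
Lemma frob_box H : frob H -> H \subset box F.
Proof.
move=> fr; apply/subsetP => c cH; have [_ [_ [_ max_hole]]] := fr.
pose above := [pred c' | (c' \in H) && [forall i, c i <= c' i]].
have [|cs /andP[csH /forallP c_cs] cs_max] := @arg_maxnP _ c above csum.
  by rewrite /= cH; apply/forallP.
suff csF : cube_pt cs = F.
  by apply/in_boxP => i; apply: leq_trans (c_cs i) _; rewrite -(congr1 (fun f => f i) csF).
apply: max_hole => [[] | _ /hole_of[c' c'H <-] [cs_c' ne]]; first by exists cs.
have : csum c' <= csum cs.
  by apply: cs_max; rewrite /= c'H; apply/forallP => i; apply: leq_trans (c_cs i) (cs_c' i).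
by rewrite leqNgt csum_lt //; apply/eqP => e; apply: ne; rewrite e.
Qed.

Lemma frob_antipode H c : frob H -> c \in box F -> (c \in H) || (antipode c \in H).
Proof.
move=> fr /in_boxP cB; apply/negPn/negP => /norP[cH acH].
by move: (frob_cF fr); apply/negP/(frob_add fr cH acH) => i; rewrite antipodeE cFE subnKC.
Qed.

Lemma frob_indep_adjF H : frob H -> indep (adjF F) (box F :\: H).
Proof.
move=> fr; apply/indepP => x y /setDP[_ xH] /setDP[_ yH]; apply/negP => /adjFP xy.
by move: (frob_cF fr); apply/negP/(frob_add fr xH yH) => i; rewrite cFE.
Qed.

Lemma frob_indep_adjFm H l : frob H -> antipode l \in H ->
  indep (adjFm F (cube_pt l)) (box F :\: H).
Proof.
move=> fr lH; apply/indepP => x y xBH yBH; apply/norP; split.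
  by move/indepP: (frob_indep_adjF fr); apply.
move: xBH yBH => /setDP[_ xH] /setDP[_ yH]; apply/negP => /adj_shiftP xy.
by move: lH; apply/negP/(frob_add fr xH yH) => i; rewrite antipodeE -(xy i) addnK.
Qed.

End Frobenius.

(* Write [x = base + lvl m]
   with [lvl] maximal and let [y j = base + j m] for [j <= top], the largest
   such index with [y j] in the box; the component is the walk [w] visiting
   [F - y 0, y 0, F - y 1, y 1, ..., F - y top, y top].  It is [folded] when
   [F - y 0 = y top]: the walk is then a palindrome and the component has a
   loop at its middle vertex. *)
Module Line.
Section Walk.
Variables (d : nat) (F m : pt d) (i0 : 'I_d) (x : cube F).
Hypotheses (m_i0 : 0 < m i0) (x_box : x \in box F).

Let N := (maxF F).+1.
Let x_le i : x i <= F i. Proof. by move/in_boxP: x_box. Qed.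

Definition lvl := \max_(j < N | [forall i, j * m i <= x i]) j.

Lemma lvl_spec : [forall i, lvl * m i <= x i] /\
  (forall j, [forall i, j * m i <= x i] -> j <= lvl).
Proof.
apply: bigmax_ord_spec => [|j /forallP /(_ i0) jx]; first by apply/forallP => i; rewrite mul0n.
rewrite ltnS (leq_trans _ (F_le_maxF F i0)) // (leq_trans _ (x_le i0)) //.
by apply: leq_trans jx; rewrite leq_pmulr.
Qed.

Definition base i := x i - lvl * m i.

Lemma base_le i : base i <= F i.
Proof. exact: leq_trans (leq_subr _ _) (x_le i). Qed.

Lemma base_lvl i : base i + lvl * m i = x i.
Proof. by rewrite subnK //; case: lvl_spec => /forallP. Qed.

Lemma base_not_ge : ~~ [forall i, m i <= base i].
Proof.
apply/negP => /forallP ge_m; have [_ /(_ lvl.+1)] := lvl_spec.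
rewrite ltnn; apply/implyP/forallP => i.
by rewrite mulSn -(base_lvl i) leq_add2r.
Qed.

Definition top := \max_(j < N | [forall i, base i + j * m i <= F i]) j.

Lemma top_spec : [forall i, base i + top * m i <= F i] /\
  (forall j, [forall i, base i + j * m i <= F i] -> j <= top).
Proof.
apply: bigmax_ord_spec => [|j /forallP /(_ i0) jF].
  by apply/forallP => i; rewrite mul0n addn0 base_le.
rewrite ltnS; apply: leq_trans (F_le_maxF F i0); apply: leq_trans jF.
by apply: leq_trans (leq_pmulr _ m_i0) (leq_addl _ _).
Qed.

Lemma lvl_le_top : lvl <= top.
Proof. by case: top_spec => _; apply; apply/forallP => i; rewrite base_lvl. Qed.

Lemma base_top_le j i : j <= top -> base i + j * m i <= F i.
Proof.
move=> jt; case: top_spec => /forallP /(_ i) h _; apply: leq_trans h.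
by rewrite leq_add2l leq_mul2r jt orbT.
Qed.

Definition y j := cube_of F (fun i => base i + j * m i).

Lemma yE j i : j <= top -> y j i = base i + j * m i :> nat.
Proof. by move=> jt; rewrite cube_ofE // base_top_le. Qed.

Lemma y_box j : j <= top -> y j \in box F.
Proof. by move=> jt; apply/in_boxP => i; rewrite yE // base_top_le. Qed.

Lemma antipode_yE j i : j <= top -> antipode (y j) i = F i - (base i + j * m i) :> nat.
Proof. by move=> jt; rewrite antipodeE yE. Qed.

Definition w a := if odd a then y a./2 else antipode (y a./2).
Definition len := top.+1.*2.

Lemma w_double j : w j.*2 = antipode (y j).
Proof. by rewrite /w odd_double doubleK. Qed.

Lemma w_doubleS j : w j.*2.+1 = y j.
Proof. by rewrite /w /= odd_double uphalf_double. Qed.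

Lemma w_adj a : a.+1 < len -> adjFm F m (w a) (w a.+1).
Proof.
rewrite /len; case: (nat_parity a) => -[j ->] aM.
  by rewrite w_double w_doubleS /adjFm adjF_sym antipode_adjF ?y_box //; lia.
have jt : j.+1 <= top by lia.
rewrite -doubleS w_double w_doubleS; apply/orP; right; apply/adj_shiftP => i.
by rewrite yE ?antipode_yE //; [have := base_top_le i jt; rewrite mulSn; lia | lia].
Qed.

Lemma w_nbr a c : a < len -> adjFm F m (w a) c ->
  (0 < a /\ c = w a.-1) \/ (a.+1 < len /\ c = w a.+1).
Proof.
rewrite /len; case: (nat_parity a) => -[j ->] aM; have jt : j <= top by lia.
- rewrite w_double => /orP[/adjF_antipode -> | /adj_shiftP h].
    by right; split; [lia | rewrite antipodeK ?y_box // w_doubleS].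
  case: j jt h {aM} => [|j] jt h.
    move/negP: base_not_ge; case; apply/forallP => i.
    by have := h i; rewrite antipode_yE // mul0n addn0; have := base_le i; lia.
  left; split => //; rewrite doubleS /= w_doubleS; apply: cube_ext => i.
  by have := h i; rewrite antipode_yE // yE 1?ltnW //; have := base_top_le i jt; rewrite mulSn; lia.
- rewrite w_doubleS => /orP[/adjF_antipode -> | /adj_shiftP h]; first by left; rewrite w_double.
  have jt' : j.+1 <= top.
    by case: top_spec => _; apply; apply/forallP => i; have := h i; rewrite yE // mulSn; lia.
  right; split; first by lia.
  rewrite -doubleS w_double; apply: cube_ext => i.
  by rewrite antipode_yE //; have := h i; rewrite yE // mulSn; lia.
Qed.

Definition walk := mkseq w len.

Lemma walk_sorted : sorted (sadj (adjFm F m)) walk.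
Proof. by apply: mkseq_sorted => a aM; rewrite /sadj w_adj. Qed.

Lemma walk_closed : closed (sadj (adjFm F m)) [set c in walk].
Proof.
apply: intro_closed; first exact/sym_connect_sym/sadj_sym.
move=> c c' cc'; rewrite !in_set !mem_mkseq => /existsP[a /eqP ac]; move: cc'.
rewrite /sadj [adjFm _ _ c' _]adjFm_sym orbb -ac.
case/(w_nbr (ltn_ord a)) => -[aM ->].
  by apply/existsP; exists (Ordinal (leq_ltn_trans (leq_pred a) (ltn_ord a))).
by apply/existsP; exists (Ordinal aM).
Qed.

Lemma x_in_walk : x \in walk.
Proof.
have lvl_len : lvl.*2.+1 < len by have := lvl_le_top; rewrite /len; lia.
rewrite mem_mkseq; apply/existsP; exists (Ordinal lvl_len).
by rewrite /= w_doubleS; apply/eqP/cube_ext => i; rewrite yE ?lvl_le_top ?base_lvl.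
Qed.

Lemma componentE : component (adjFm F m) x = [set c in walk].
Proof. exact: component_walk walk_sorted walk_closed x_in_walk. Qed.

Definition folded := antipode (y 0) == y top.

Lemma y_inj j j' : j <= top -> j' <= top -> y j = y j' -> j = j'.
Proof.
move=> jt j't /(congr1 (fun c : cube F => val (c i0))) /=; rewrite !yE //.
by move/addnI/eqP; rewrite eqn_pmul2r // => /eqP.
Qed.

Lemma antipode_y_folded j j' : j <= top -> j' <= top -> antipode (y j) = y j' -> folded.
Proof.
move=> jt j't e.
have F_eq i : F i = base i + base i + (j + j') * m i.
  have := congr1 (fun c : cube F => val (c i)) e; rewrite /= antipode_yE // yE // mulnDl.
  by have := base_top_le i jt; lia.
have st : j + j' <= top.
  by case: top_spec => _; apply; apply/forallP => i; have := F_eq i; lia.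
have ts : top <= j + j'.
  rewrite leqNgt; apply/negP => lt; move/negP: base_not_ge; apply; apply/forallP => i.
  by have := base_top_le i lt; have := F_eq i; rewrite mulSn; lia.
have top_eq : top = j + j' by lia.
by apply/eqP/cube_ext => i; rewrite antipode_yE // yE // top_eq mul0n addn0; have := F_eq i; lia.
Qed.

Lemma folded_antipode_y j : folded -> j <= top -> antipode (y j) = y (top - j).
Proof.
move=> /eqP e jt.
have F_eq i : F i = base i + base i + top * m i.
  have := congr1 (fun c : cube F => val (c i)) e; rewrite /= antipode_yE // yE // mul0n addn0.
  by have := base_le i; lia.
apply: cube_ext => i; rewrite antipode_yE // yE ?leq_subr // mulnBl.
have : j * m i <= top * m i by rewrite leq_mul2r jt orbT.
by have := F_eq i; lia.
Qed.

Lemma folded_w_rev a : folded -> a < len -> w a = w (len.-1 - a).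
Proof.
rewrite /len => fo; case: (nat_parity a) => -[j ->] aM; have jt : j <= top by lia.
  rewrite w_double (folded_antipode_y fo jt) (_ : _.-1 - _ = (top - j).*2.+1) ?w_doubleS //.
  lia.
rewrite w_doubleS (_ : _.-1 - _ = (top - j).*2) ?w_double; last lia.
by rewrite folded_antipode_y ?leq_subr // subKn.
Qed.

Definition ys := [set y j | j : 'I_top.+1].

Lemma card_ys : #|ys| = top.+1.
Proof.
by rewrite card_imset ?card_ord // => j j' /y_inj e; apply/val_inj/e; rewrite -ltnS.
Qed.

Lemma ys_box : ys \subset box F.
Proof. by apply/subsetP => _ /imsetP[j _ ->]; rewrite y_box // -ltnS. Qed.

Lemma ys_walk : ys \subset [set c in walk].
Proof.
apply/subsetP => _ /imsetP[j _ ->]; rewrite in_set mem_mkseq; apply/existsP.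
have jl : j.*2.+1 < len by have := ltn_ord j; rewrite /len; lia.
by exists (Ordinal jl); rewrite /= w_doubleS.
Qed.

Lemma antipode_ys_walk : antipode @: ys \subset [set c in walk].
Proof.
apply/subsetP => _ /imsetP[_ /imsetP[j _ ->] ->]; rewrite in_set mem_mkseq; apply/existsP.
have jl : j.*2 < len by have := ltn_ord j; rewrite /len; lia.
by exists (Ordinal jl); rewrite /= w_double.
Qed.

Lemma antipode_y0_unshiftable : antipode (y 0) \in unshiftable F m.
Proof.
rewrite inE; apply: contra base_not_ge => /forallP h; apply/forallP => i.
by have := h i; rewrite antipode_yE // mul0n addn0; have := base_le i; lia.
Qed.

Lemma y_top_unshiftable : y top \in unshiftable F m.
Proof.
rewrite inE; apply/negP => /forallP h; have [_ /(_ top.+1)] := top_spec; rewrite ltnn.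
by apply/implyP/forallP => i; have := h i; rewrite yE // mulSn; lia.
Qed.

Lemma n_indep_line_unfolded : ~~ folded ->
  (INR (n_indep (adjFm F m) [set c in walk]) <=
   weight golden kappa (unshiftable F m) [set c in walk])%R.
Proof.
move=> unf.
have card_walk : len <= #|[set c in walk]|.
  have disj : [disjoint ys & antipode @: ys].
    rewrite disjoints_subset; apply/subsetP => _ /imsetP[j _ ->]; rewrite inE.
    apply/imsetP => -[_ /imsetP[j' _ ->] /esym e].
    by move: unf; rewrite (antipode_y_folded _ _ e) // -ltnS.
  have card_ays : #|antipode @: ys| = top.+1.
    by rewrite card_in_imset ?card_ys //; apply: sub_in2 (@antipode_inj _ F); apply/subsetP/ys_box.
  rewrite /len -addnn -[X in X + _]card_ys -[X in _ + X]card_ays.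
  rewrite -[_ + _]subn0 -(cards0 (cube F)) -(disjoint_setI0 disj) -cardsU subset_leq_card //.
  by rewrite subUset ys_walk antipode_ys_walk.
have card_unsh : 2 <= #|[set c in walk] :&: unshiftable F m|.
  have sub : [set antipode (y 0); y top] \subset [set c in walk] :&: unshiftable F m.
    have y0_ys : y 0 \in ys by apply/imsetP; exists ord0.
    have ytop_ys : y top \in ys by apply/imsetP; exists ord_max.
    rewrite subUset !sub1set !in_setI antipode_y0_unshiftable y_top_unshiftable !andbT.
    by rewrite (subsetP antipode_ys_walk) ?imset_f // (subsetP ys_walk).
  by have := subset_leq_card sub; rewrite cards2 -/folded unf.
have := n_indep_walk walk_sorted; rewrite size_mkseq => /leP /le_INR le_fib.
apply: Rle_trans le_fib _; rewrite (_ : len.+2 = 2 * top.+2); last by rewrite /len; lia.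
apply: Rle_trans (fib_even_le _) _.
have -> : (golden ^ (2 * top.+2) / sqrt 5 = golden ^ len * kappa ^ 2)%R.
  by rewrite kappa_sq /Rdiv -Rmult_assoc -pow_add /len; congr (golden ^ _ * _)%R; lia.
by apply: weight_ge card_walk card_unsh; [have := golden_gt1; lra | exact: kappa_ge1].
Qed.

Lemma n_indep_line_folded : folded ->
  (INR (n_indep (adjFm F m) [set c in walk]) <=
   weight golden kappa (unshiftable F m) [set c in walk])%R.
Proof.
move=> fo; have top_len : top.+1 < len by rewrite /len; lia.
have walk_half : [set c in walk] \subset [set c in mkseq w top.+1].
  apply/subsetP => c; rewrite !in_set !mem_mkseq => /existsP[a /eqP <-]; apply/existsP.
  have [a_top | top_a] := leqP a top; first by exists (Ordinal (a_top : a < top.+1)).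
  have b_top : len.-1 - a < top.+1 by have := ltn_ord a; have : len = top.+1.*2 by []; lia.
  by exists (Ordinal b_top); rewrite /= -folded_w_rev.
have loop : adjFm F m (w top) (w top).
  have w_mid : w top.+1 = w top.
    by rewrite (folded_w_rev fo top_len) (_ : _.-1 - _ = top) //; rewrite /len; lia.
  by rewrite -{2}w_mid w_adj.
have half_sorted : sorted (sadj (adjFm F m)) (rcons (mkseq w top) (w top)).
  rewrite -mkseqS; apply: mkseq_sorted => a a_top.
  by rewrite /sadj w_adj //; apply: ltn_trans top_len.
have := n_indep_walk_loop half_sorted loop; rewrite -mkseqS size_mkseq => /leP /le_INR le_fib.
apply: Rle_trans (le_INR _ _ (leP (n_indepS _ walk_half))) _.
apply: Rle_trans le_fib _; apply: Rle_trans (fib_le_golden _) _.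
rewrite -[X in (X <= _)%R]Rmult_1_r -(pow_O kappa).
apply: weight_ge; [have := golden_gt1; lra | exact: kappa_ge1 | | by []].
by rewrite -card_ys; apply: subset_leq_card ys_walk.
Qed.

Lemma n_indep_component :
  (INR (n_indep (adjFm F m) (component (adjFm F m) x)) <=
   weight golden kappa (unshiftable F m) (component (adjFm F m) x))%R.
Proof.
rewrite componentE; case: (boolP folded).
  exact: n_indep_line_folded.
exact: n_indep_line_unfolded.
Qed.

End Walk.
End Line.

Lemma n_indep_adjFm d (F m : pt d) i0 : 0 < m i0 ->
  (INR (n_indep (adjFm F m) (box F)) <=
   golden ^ #|box F| * kappa ^ #|box F :&: unshiftable F m|)%R.
Proof.
move=> m_i0; apply: (n_indep_le_weight _ _ _ (@box_closed _ F m) (subxx (box F))) => [||x xB].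
- by have := golden_gt1; lra.
- by have := kappa_ge1; lra.
exact: Line.n_indep_component m_i0 xB.
Qed.


Section Counting.
Variables (d : nat) (F : pt d).
Implicit Types (H L : {set cube F}) (l : cube F).

Definition frobs := [set H : {set cube F} | asbool (frob H)].

Lemma frobsP H : reflect (frob H) (H \in frobs).
Proof. by rewrite inE; apply: asboolP. Qed.

Lemma compl_box_inj : {in frobs &, injective (fun H => box F :\: H)}.
Proof.
move=> H1 H2 /frobsP/frob_box H1B /frobsP/frob_box H2B /= e.
have setDDK (H : {set cube F}) : H \subset box F -> box F :\: (box F :\: H) = H.
  by move=> HB; rewrite setDDr setDv set0U (setIidPr HB).
by rewrite -(setDDK _ H1B) -(setDDK _ H2B) e.
Qed.

Definition frobs_hole l := [set H in frobs | antipode l \in H].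

Lemma card_frobs_hole l : #|frobs_hole l| <= n_indep (adjFm F (cube_pt l)) (box F).
Proof.
have inj : {in frobs_hole l &, injective (fun H => box F :\: H)}.
  by apply: sub_in2 compl_box_inj => H /setIdP[].
rewrite -(card_in_imset inj); apply/subset_leq_card/subsetP => I /imsetP[H].
by case/setIdP => /frobsP fr lH ->; rewrite inE subsetDl frob_indep_adjFm.
Qed.

Section NoHole.
Variable L : {set cube F}.
Hypotheses (L_box : L \subset box F) (cF_L : cF F \notin L).

Definition frobs_nohole := [set H in frobs | [forall l in L :\ c0 F, antipode l \notin H]].

Lemma frobs_nohole_mem H l : H \in frobs_nohole -> l \in L ->
  (l \in H) = (l != c0 F) /\ (antipode l \in H) = (l == c0 F).
Proof.
case/setIdP => /frobsP fr /forall_inP nH lL.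
have [-> | l0] := eqVneq l (c0 F); first by rewrite (negbTE (frob_c0 fr)) antipode_c0 frob_cF.
have alH : antipode l \notin H by apply: nH; rewrite !inE l0.
split; last by rewrite (negbTE alH).
by have := frob_antipode fr (subsetP L_box l lL); rewrite (negbTE alH) orbF => ->.
Qed.

Lemma frobs_nohole_disjoint H : H \in frobs_nohole -> [disjoint L & antipode @: L].
Proof.
move=> HA; rewrite disjoints_subset; apply/subsetP => l lL; rewrite inE.
have lB := subsetP L_box l lL; rewrite mem_antipode_imset //; apply/negP => alL.
have [[lH _] [_ alH]] := (frobs_nohole_mem HA lL, frobs_nohole_mem HA alL).
rewrite antipodeK // in alH.
have [l0 | l0] := eqVneq l (c0 F); first by move: alL; rewrite l0 antipode_c0 (negbTE cF_L).
move: alH; rewrite lH l0 => /esym/eqP al0.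
by move: lL; rewrite -(antipodeK lB) al0 antipode_c0 (negbTE cF_L).
Qed.

Definition box_rest := box F :\: (L :|: antipode @: L).

Lemma box_rest_closed : closed (sadj (adjF F)) box_rest.
Proof.
apply: closed_adjF => y yB; rewrite !in_setD !in_setU antipode_box yB /=.
by rewrite !mem_antipode_imset ?antipode_box // antipodeK // orbC.
Qed.

Lemma frobs_nohole_inj : {in frobs_nohole &, injective (fun H => box_rest :\: H)}.
Proof.
move=> H1 H2 H1A H2A /= e; apply/setP => c.
have frH (H : {set cube F}) : H \in frobs_nohole -> frob H by case/setIdP => /frobsP.
have [cR | ] := boolP (c \in box_rest).
  have := congr1 (fun X : {set cube F} => c \in X) e.
  by rewrite [c \in box_rest :\: H1]in_setD [c \in box_rest :\: H2]in_setD cR !andbT => /negb_inj.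
rewrite in_setD in_setU negb_and negbK => /orP[/orP[cL | /imsetP[l lL ->]] | cB].
- by rewrite (frobs_nohole_mem H1A cL).1 (frobs_nohole_mem H2A cL).1.
- by rewrite (frobs_nohole_mem H1A lL).2 (frobs_nohole_mem H2A lL).2.
by apply/idP/idP => /(subsetP (frob_box (frH _ _))) cB'; rewrite cB' in cB.
Qed.

Lemma card_frobs_nohole :
  (INR #|frobs_nohole| <= Rpower (sqrt 3) (INR #|box F| - 2 * INR #|L|))%R.
Proof.
have [-> | [H0 H0A]] := set_0Vmem frobs_nohole; first by rewrite cards0; apply/Rlt_le/exp_pos.
have card_LU : #|L :|: antipode @: L| = 2 * #|L|.
  rewrite cardsU (disjoint_setI0 (frobs_nohole_disjoint H0A)) cards0 subn0 mul2n -addnn.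
  by rewrite card_in_imset //; apply: sub_in2 (@antipode_inj _ F); apply/subsetP.
have LU_box : L :|: antipode @: L \subset box F.
  by rewrite subUset L_box; apply/subsetP => _ /imsetP[l _ ->]; apply: antipode_box.
have card_box_rest : #|box_rest| = #|box F| - 2 * #|L| by rewrite cardsDS // card_LU.
have : #|frobs_nohole| <= n_indep (adjF F) box_rest.
  rewrite -(card_in_imset frobs_nohole_inj); apply/subset_leq_card/subsetP => _ /imsetP[H HA ->].
  rewrite inE subsetDl /=; case/setIdP: HA => /frobsP /frob_indep_adjF.
  by move=> iH _; apply: indepS iH; apply: setSD; apply: subsetDl.
move=> /leP /le_INR le_n; apply: Rle_trans le_n _.
apply: Rle_trans (n_indep_adjF box_rest_closed (subsetDl _ _)) _.
rewrite -Rpower_pow; last by apply: sqrt_lt_R0; lra.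
rewrite card_box_rest minus_INR ?mult_INR; last by rewrite -card_LU; apply/leP/subset_leq_card.
by right.
Qed.

End NoHole.

Lemma frobs_split L :
  frobs \subset frobs_nohole L :|: \bigcup_(l in L :\ c0 F) frobs_hole l.
Proof.
apply/subsetP => H HF; rewrite inE.
case: (boolP [forall l in L :\ c0 F, antipode l \notin H]) => [all | ]; first by rewrite inE HF all.
case/forall_inPn => l lL /negbNE lH.
by apply/orP; right; apply/bigcupP; exists l => //; rewrite inE HF.
Qed.

Lemma NF_eq0 : (forall i, F i = 0) -> NF F = 0.
Proof.
move=> F0; apply/eqP; rewrite cards_eq0; apply/eqP/setP => H; rewrite !inE.
apply/negbTE/negP => /asboolP fr; move: (frob_c0 fr).
by rewrite (_ : c0 F = cF F) ?frob_cF //; apply: cube_ext => i; rewrite c0E cFE F0.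
Qed.

Lemma NF_le L (t : R) : L \subset box F -> c0 F \in L -> cF F \notin L ->
  (forall l, l \in L -> INR #|box F :&: unshiftable F (cube_pt l)| <= t)%R ->
  (INR (NF F) <= Rpower (sqrt 3) (INR (normF F) - 2 * INR #|L|) +
                 (INR #|L| - 1) * (golden ^ normF F * Rpower kappa t))%R.
Proof.
move=> LB c0L cFL unsh_le.
have NF_le : NF F <=
    #|frobs_nohole L| + \sum_(l in L :\ c0 F) n_indep (adjFm F (cube_pt l)) (box F).
  rewrite (_ : NF F = #|frobs|) //; apply: leq_trans (subset_leq_card (frobs_split L)) _.
  apply: leq_trans (leq_card_setU _ _) _; rewrite leq_add2l.
  by apply: leq_trans (card_bigcup_leq _ _) _; apply: leq_sum => l _; apply: card_frobs_hole.
apply: Rle_trans (le_INR _ _ (leP NF_le)) _; rewrite plus_INR -card_box.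
apply: Rplus_le_compat; first exact: card_frobs_nohole.
rewrite [in X in (X * _)%R](cardsD1 (c0 F) L) c0L plus_INR /= Rplus_minus_l.
apply: INR_sum_le => l; rewrite in_setD1 => /andP[l0 lL].
have [i0 li0] := cube_neq0 l0.
apply: Rle_trans (@n_indep_adjFm _ F (cube_pt l) i0 li0) _; rewrite card_box.
apply: Rmult_le_compat_l; first by apply: pow_le; have := golden_gt1; lra.
rewrite -Rpower_pow; last exact: kappa_pos.
by apply: Rle_Rpower; [exact: kappa_ge1 | exact: unsh_le].
Qed.

Lemma NF_le_sqrt3 i0 : 0 < F i0 -> (INR (NF F) <= Rpower (sqrt 3) (INR (normF F) - 2))%R.
Proof.
move=> Fi0; apply: Rle_trans (NF_le (t := INR #|box F|) _ (set11 _) _ _) _.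
- by rewrite sub1set c0_box.
- by rewrite inE eq_sym (c0_neq_cF Fi0).
- by move=> l _; apply/le_INR/leP/subset_leq_card/subsetIl.
by rewrite cards1 /= Rminus_diag Rmult_0_l Rplus_0_r Rmult_1_r; right.
Qed.

End Counting.

Section SmallBox.
Variables (d : nat) (F : pt d).

Lemma card_unshiftable_le (eps : R) (l : cube F) : l \in box F -> (0 <= eps <= 1)%R ->
  (forall i, INR (l i) <= eps * INR (F i).+1)%R ->
  (INR #|box F :&: unshiftable F (cube_pt l)| <= (1 - (1 - eps) ^ d) * INR (normF F))%R.
Proof.
move=> /in_boxP lB eps01 l_le.
set D := [set c : cube F | [forall i, c i < (F i).+1 - l i]].
have DB : D \subset box F.
  by apply/subsetP => c; rewrite inE => /forallP h; apply/in_boxP => i; have := h i; lia.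
have -> : box F :&: unshiftable F (cube_pt l) = box F :\: D.
  apply/setP => c; rewrite !inE andbC; congr (~~ _ && _); apply: eq_forallb => i.
  by rewrite /cube_pt; have := lB i; case: leqP; case: ltnP; lia.
have card_D : ((1 - eps) ^ d * INR (normF F) <= INR #|D|)%R.
  rewrite card_ffun_lt => [|i]; last by apply: leq_trans (leq_subr _ _) _; rewrite ltnS F_le_maxF.
  apply: prod_INR_scale_le => [|i]; first lra.
  rewrite minus_INR; last by apply/leP; have := lB i; lia.
  by have := l_le i; lra.
rewrite cardsDS // minus_INR; last exact/leP/subset_leq_card.
rewrite card_box Rmult_minus_distr_r Rmult_1_l.
by apply/Rplus_le_compat_l/Ropp_le_contravar.
Qed.

Lemma exists_small_box (eps : R) : (0 < eps < 1)%R -> exists Lc : {set cube F},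
  [/\ Lc \subset box F, c0 F \in Lc, cF F \in Lc -> box F \subset Lc,
      (eps ^ d * INR (normF F) <= INR #|Lc|)%R &
      forall l, l \in Lc ->
        (INR #|box F :&: unshiftable F (cube_pt l)| <= (1 - (1 - eps) ^ d) * INR (normF F))%R].
Proof.
move=> [e0 e1].
have ceil_i i : exists k : nat, (eps * INR (F i).+1 <= INR k < eps * INR (F i).+1 + 1)%R.
  by apply: nat_ceil_ex; have := pos_INR (F i).+1; nra.
have [b b_spec] := fin_all_exists ceil_i.
have b_le i : b i <= (F i).+1.
  by apply: INR_lt_succ; have := b_spec i; rewrite !S_INR; have := pos_INR (F i); nra.
have b_pos i : 0 < b i.
  rewrite lt0n; apply/eqP => b0; have := b_spec i; rewrite b0 S_INR /=; have := pos_INR (F i); nra.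
have Lc_box : [set c : cube F | [forall i, c i < b i]] \subset box F.
  apply/subsetP => c; rewrite inE => /forallP cb; apply/in_boxP => i.
  by rewrite -ltnS; apply: leq_trans (cb i) (b_le i).
exists [set c : cube F | [forall i, c i < b i]]; split => //.
- by rewrite inE; apply/forallP => i; rewrite c0E.
- rewrite inE => /forallP Fb; apply/subsetP => c /in_boxP cB; rewrite inE; apply/forallP => i.
  by apply: leq_ltn_trans (cB i) _; have := Fb i; rewrite cFE.
- rewrite card_ffun_lt => [|i]; last by apply: leq_trans (b_le i) _; rewrite ltnS F_le_maxF.
  by apply: prod_INR_scale_le => [|i]; [lra | case: (b_spec i)].
move=> l lLc; apply: card_unshiftable_le (subsetP Lc_box l lLc) _ _ => [|i]; first lra.
move: lLc; rewrite inE => /forallP lb; have [_ hb] := b_spec i.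
have li : (INR (l i) + 1 <= INR (b i))%R by rewrite -S_INR; apply/le_INR/leP/lb.
by apply/Rlt_le/(Rplus_lt_reg_r 1)/(Rle_lt_trans _ _ _ li hb).
Qed.

Lemma exists_split_set (eps : R) i0 : (0 < eps < 1)%R -> 0 < F i0 ->
  (eps ^ d * INR (normF F) <= INR (normF F) - 1)%R -> exists L : {set cube F},
  [/\ L \subset box F, c0 F \in L, cF F \notin L,
      (eps ^ d * INR (normF F) <= INR #|L| < eps ^ d * INR (normF F) + 1)%R &
      forall l, l \in L ->
        (INR #|box F :&: unshiftable F (cube_pt l)| <= (1 - (1 - eps) ^ d) * INR (normF F))%R].
Proof.
move=> eps01 Fi0 e_small; have [e0 _] := eps01.
have [Lc [LcB c0Lc cFLc card_Lc unsh_Lc]] := exists_small_box eps01.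
have n_pos : (0 < INR (normF F))%R by apply/lt_0_INR/ltP; have := normF_ge2 Fi0; lia.
have e_pos : (0 < eps ^ d)%R by apply: pow_lt.
have [k [ek ke]] := nat_ceil_ex (Rlt_le _ _ (Rmult_lt_0_compat _ _ e_pos n_pos)).
have k0 : 0 < k by apply/ltP/INR_lt; rewrite /=; nra.
have k_le : k <= #|Lc :\ cF F|.
  case: (boolP (cF F \in Lc)) => [cF_Lc | cF_Lc].
    have Lc_box : Lc = box F by apply/eqP; rewrite eqEsubset LcB cFLc.
    have n_eq : normF F = #|Lc :\ cF F|.+1 by rewrite -card_box -Lc_box (cardsD1 (cF F)) cF_Lc.
    by rewrite -ltnS -n_eq; apply/ltP/INR_lt; lra.
  rewrite (cardsD1 (cF F)) (negbTE cF_Lc) in card_Lc; apply: INR_lt_succ.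
  by apply: Rlt_le_trans ke _; apply: Rplus_le_compat_r.
have c0Lc' : c0 F \in Lc :\ cF F by rewrite in_setD1 c0Lc (c0_neq_cF Fi0).
have /(exists_subset_card c0Lc')[L [LLc c0L cardL]] : 0 < k <= #|Lc :\ cF F|.
  by rewrite k0 k_le.
have LLc' := subset_trans LLc (subD1set _ _).
exists L; rewrite cardL; split => //; first exact: subset_trans LLc' LcB.
  by apply/negP => /(subsetP LLc); rewrite in_setD1 eqxx.
by move=> l /(subsetP LLc'); apply: unsh_Lc.
Qed.

End SmallBox.

Theorem lemma6p4 (d : nat) (eps : R) (F : 'I_d -> nat) :
  (0 < eps < 1)%R ->
  (INR (NF F) <=
     Rpower (sqrt 3) ((1 - 2 * eps ^ d) * INR (normF F)) +
     eps ^ d * INR (normF F) * Rpower golden (INR (normF F)) *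
       Rpower (golden / Rpower 5 (1 / 4))
              ((1 - (1 - eps) ^ d) * INR (normF F)))%R.
Proof.
move=> eps01; have [e0 _] := eps01.
change (INR (NF F) <= NF_bound (normF F) (eps ^ d) (1 - (1 - eps) ^ d))%R.
have [i0 Fi0 | F0] := pickP (fun i => 0 < F i); last first.
  by rewrite NF_eq0 => [|i]; [apply/NF_bound_ge0/pow_le; lra | apply/eqP; rewrite -leqn0 leqNgt F0].
have d0 : 0 < d := leq_ltn_trans (leq0n i0) (ltn_ord i0).
have [e_large | e_small] := Rlt_le_dec (INR (normF F) - 1) (eps ^ d * INR (normF F)).
  apply: Rle_trans (NF_le_sqrt3 Fi0) (sqrt3_le_NF_bound (normF_ge2 Fi0) e_large _).
  exact: pow_le_1_sub.
have [L [LB c0L cFL [eL Le] unsh_le]] := exists_split_set eps01 Fi0 e_small.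
by apply: Rle_trans (NF_le LB c0L cFL unsh_le) (split_le_NF_bound _ eL Le).
Qed.
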